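(* Let $p$ be an odd prime, $d\ge2$ an integer with $p\nmid d$, and $\overline{\mathbb{F}_p}$ an algebraic closure of $\mathbb{F}_p$. Let $\zeta_1,\dots,\zeta_{\phi(d)}$ be the primitive $d$-th roots of unity in $\overline{\mathbb{F}_p}$, and let $C$ be the $\phi(d)\times d$ matrix whose $c$-th row is $(1,\zeta_c,\zeta_c^2,\dots,\zeta_c^{d-1})$. Let $\chi_1,\dots,\chi_n$ be Dirichlet characters of conductor $d$, with values in $K=\mathbb{Q}_p(\chi_1,\dots,\chi_n)$; let $\pi$ be a prime of the valuation ring $\mathcal{O}_K$, and regard each $\chi_i$, after reduction modulo $\pi$, as a function $\mathbb{Z}/d\mathbb{Z}\to\mathbb{F}_q=\mathcal{O}_K/\pi\subseteq\overline{\mathbb{F}_p}$ (with $\chi_i(h)=0$ when $\gcd(h,d)>1$). Assume the $\chi_i$ are pairwise distinct modulo $\pi$, i.e. for $i\ne i'$ there is $a\in(\mathbb{Z}/d\mathbb{Z})^*$ with $\chi_i(a)\not\equiv\chi_{i'}(a)\pmod{\pi}$. Let $E$ be the $d\times n$ matrix with entry $\chi_i(h)$ in row $h$ ($h=0,\dots,d-1$) and column $i$, and let $B=CE$. Then: 1. $C$ has rank $\phi(d)$; 2. the set $\{(1,\zeta,\dots,\zeta^{d-1}):\ \zeta\in\overline{\mathbb{F}_p},\ \zeta^d=1,\ \zeta\text{ not a primitive }d\text{-th root of unity}\}$ is a basis of $\ker(C)\subseteq\overline{\mathbb{F}_p}^{\,d}$; 3. $\ker(B)=\{(0,\dots,0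)\}$.
   Context: $\phi$ denotes Euler's totient function. Matrices act on column vectors over $\overline{\mathbb{F}_p}$. *)

From HB Require Import structures.
From mathcomp Require Import all_boot all_order all_algebra all_field.
Set Implicit Arguments. Unset Strict Implicit. Unset Printing Implicit Defensive.
Import Order.TTheory GRing.Theory Num.Theory.
Local Open Scope ring_scope.

(* Dirichlet characters modulo d, with values in algC (algebraic numbers,
   which embed into an algebraic closure of Q_p), viewed as functions on nat:
   completely multiplicative, d-periodic, chi n = 0 iff gcd(n,d) > 1. *)
Definition dirichlet_char (d : nat) (chi : nat -> algC) : Prop :=
  [/\ forall m k, chi (m * k)%N = chi m * chi k,
      forall k, chi (k + d)%N = chi k &
      forall k, chi k != 0 <-> coprime k d].

Definition induced_modulus (d d1 : nat) (chi : nat -> algC) : Prop :=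
  (d1 %| d)%N /\
  forall a, coprime a d -> a = 1 %[mod d1] -> chi a = 1.

Definition has_conductor (d f : nat) (chi : nat -> algC) : Prop :=
  dirichlet_char d chi /\ induced_modulus d f chi /\
  forall d1, induced_modulus d d1 chi -> (f <= d1)%N.

(* Reduction modulo a prime above p: a ring homomorphism from the ring of
   algebraic integers to F (given as a function on algC, only constrained
   on algebraic integers). *)
Definition reduction_map (F : fieldType) (red : algC -> F) : Prop :=
  [/\ red 1 = 1,
      forall x y, x \in Aint -> y \in Aint -> red (x + y) = red x + red y &
      forall x y, x \in Aint -> y \in Aint -> red (x * y) = red x * red y].

Definition powcol (F : fieldType) (d : nat) (z : F) : 'cV[F]_d :=
  \col_(h < d) z ^+ h.

Definition Cmat (F : fieldType) (d : nat) (zs : seq F) : 'M[F]_(size zs, d) :=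
  \matrix_(c < size zs, h < d) zs`_c ^+ h.

Definition Emat (F : fieldType) (d n : nat) (red : algC -> F)
  (chi : 'I_n -> nat -> algC) : 'M[F]_(d, n) :=
  \matrix_(h < d, i < n) red (chi i h).

Definition mxker (F : fieldType) (m k : nat) (A : 'M[F]_(m, k)) :
  {vspace 'cV[F]_k} := lker (linfun (mulmx A)).

(* Since p does not divide d, reduction sends a primitive d-th root of unity eps
   of algC to a primitive d-th root eta of F, and the d x d Fourier matrix
   (eta^(hk)) is invertible with inverse (eta^(-hk))/d.  C consists of its rows
   at the primitive roots, so C has full rank phi(d), and by Fourier inversion
   the kernel of C is spanned by the columns (w^h)_h at the non-primitive roots w.
   For B = C E: the sum  sum_h chi(h) u^h  vanishes at every non-primitive root u,
   since otherwise a proper divisor of d would be an induced modulus of chi.  So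
   if C E x = 0, the Fourier transform of E x vanishes at all d-th roots, hence
   E x = 0, and Dedekind's independence of the distinct reduced characters
   gives x = 0. *)

From HB Require Import structures.
From mathcomp Require Import all_boot all_order all_algebra all_field.
From mathcomp Require cyclic.
Import Order.TTheory GRing.Theory Num.Theory.
Local Open Scope ring_scope.

Set Implicit Arguments. Unset Strict Implicit. Unset Printing Implicit Defensive.

Section RootsOfUnity.
Variables (F : fieldType) (d : nat).

Lemma geom_sum_root (u : F) :
  u ^+ d = 1 -> \sum_(h < d) u ^+ h = if u == 1 then d%:R else 0.
Proof.
move=> ud; have [->|u1] := eqVneq u 1.
  by under eq_bigr do rewrite expr1n; rewrite sumr_const card_ord.
have := subrX1 u d; rewrite ud subrr => /esym/eqP.
by rewrite mulf_eq0 subr_eq0 (negbTE u1) => /eqP.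
Qed.

Lemma root_unity_neq0 (u : F) : (0 < d)%N -> u ^+ d = 1 -> u != 0.
Proof.
move=> d_gt0 ud; apply/eqP => u0; move/eqP: ud.
by rewrite u0 expr0n gtn_eqF // eq_sym oner_eq0.
Qed.

Lemma prim_rootV (z : F) : d.-primitive_root z -> d.-primitive_root z^-1.
Proof.
move=> z_prim; have d_gt0 := prim_order_gt0 z_prim.
have z_neq0 := root_unity_neq0 d_gt0 (prim_expr_order z_prim).
have -> : z^-1 = z ^+ d.-1.
  by apply: (mulfI z_neq0); rewrite mulfV // -exprS prednK // prim_expr_order.
by rewrite prim_root_exp_coprime // -{2}(prednK d_gt0) coprimenS.
Qed.

Definition dft (v : 'cV[F]_d) (u : F) : F := \sum_(h < d) u ^+ h * v h 0.

Lemma dftE (v : 'cV[F]_d) u : dft v u = ((powcol d u)^T *m v) 0 0.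
Proof. by rewrite mxE; apply: eq_bigr => h _; rewrite !mxE. Qed.

Lemma Cmat_mulmxE (zs : seq F) (v : 'cV[F]_d) c : (Cmat d zs *m v) c 0 = dft v zs`_c.
Proof. by rewrite mxE; apply: eq_bigr => h _; rewrite mxE. Qed.

Lemma dft_powcol (u w : F) : dft (powcol d w) u = \sum_(h < d) (u * w) ^+ h.
Proof. by apply: eq_bigr => h _; rewrite mxE exprMn. Qed.

Lemma Cmat_mulmx_eq0 (zs : seq F) (v : 'cV[F]_d) :
  (Cmat d zs *m v == 0) = all (fun z => dft v z == 0) zs.
Proof.
apply/eqP/allP => [Cv z z_in | v_zs].
  have zs_z : (index z zs < size zs)%N by rewrite index_mem.
  by rewrite -(nth_index 0 z_in) -(Cmat_mulmxE v (Ordinal zs_z)) Cv mxE.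
by apply/colP => c; rewrite Cmat_mulmxE mxE; apply/eqP/v_zs/mem_nth.
Qed.

Section InvertibleOrder.
Hypothesis d_neq0 : d%:R != 0 :> F.

Let d_gt0 : (0 < d)%N.
Proof. by rewrite lt0n; apply: contraNneq d_neq0 => ->. Qed.

Lemma rank_Cmat (zs : seq F) :
  uniq zs -> {in zs, forall z, z ^+ d = 1} -> \rank (Cmat d zs) = size zs.
Proof.
move=> zs_uniq zs_root.
pose D := \matrix_(h < d, c < size zs) ((zs`_c)^-1 ^+ h / d%:R).
(* Geometric sums of the ratios z_c / z_c' vanish off the diagonal. *)
have CD : Cmat d zs *m D = 1%:M.
  apply/matrixP => c c'; rewrite !mxE.
  under eq_bigr do rewrite !mxE mulrA -exprMn.
  have zsc (i : 'I_(size zs)) : zs`_i ^+ d = 1 by rewrite zs_root ?mem_nth.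
  have zsc0 (i : 'I_(size zs)) := root_unity_neq0 d_gt0 (zsc i).
  rewrite -mulr_suml geom_sum_root; last by rewrite exprMn exprVn !zsc invr1 mulr1.
  rewrite (can2_eq (mulfVK (zsc0 c')) (mulfK (zsc0 c'))) mul1r nth_uniq //.
  rewrite -[(c : nat) == c']/(c == c').
  by case: eqP; rewrite ?divff ?mul0r.
apply/eqP; rewrite eqn_leq rank_leq_row /= -{1}(mxrank1 F (size zs)) -CD.
exact: mxrankM_maxl.
Qed.

Lemma free_powcol (ws : seq F) :
  uniq ws -> {in ws, forall w, w ^+ d = 1} -> free [seq powcol d w | w <- ws].
Proof.
move=> ws_uniq ws_root.
have C_free : row_free (Cmat d ws) by rewrite /row_free rank_Cmat.
apply/(@freeP _ _ _ (map_tuple (powcol d) (in_tuple ws))) => k Hk.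
suff /rowP k0 : \row_i k i = 0 by move=> i; have := k0 i; rewrite !mxE.
apply: (row_free_inj C_free); rewrite mul0mx; apply/rowP => h.
have := congr1 (fun v : 'cV_d => v h 0) Hk; rewrite summxE mxE => Hh.
rewrite !mxE -[RHS]Hh; apply: eq_bigr => i _.
by rewrite !mxE (nth_map 0) ?size_tuple // !mxE mulrC.
Qed.

End InvertibleOrder.

Section PrimitiveRoot.
Variable eta : F.
Hypothesis eta_prim : d.-primitive_root eta.

Let d_gt0 : (0 < d)%N := prim_order_gt0 eta_prim.
Let d_neq0 : d%:R != 0 :> F := prim_root_natf_neq0 eta_prim.

Lemma root_unity_expr k : (eta ^+ k) ^+ d = 1.
Proof. by rewrite exprAC (prim_expr_order eta_prim) expr1n. Qed.

Lemma big_roots_unity (V : nmodType) (rs : seq F) (G : F -> V) :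
    uniq rs -> (forall x, x \in rs <-> x ^+ d = 1) ->
  \sum_(u <- rs) G u = \sum_(k < d) G (eta ^+ k).
Proof.
move=> rs_uniq rsP; rewrite -big_enum -(big_map (fun k : 'I_d => eta ^+ k) xpredT).
apply/perm_big/uniq_perm => //.
  rewrite map_inj_uniq ?enum_uniq // => k k' /eqP.
  by rewrite (eq_prim_root_expr eta_prim) !modn_small // => /eqP /val_inj.
move=> x; apply/idP/idP => [/rsP /(prim_rootP eta_prim) [k ->] | /mapP [k _ ->]].
  by apply: (map_f (fun k : 'I_d => eta ^+ k)); rewrite mem_enum.
by apply rsP; apply: root_unity_expr.
Qed.

Lemma dft_expansion (v : 'cV[F]_d) :
  v = d%:R^-1 *: \sum_(k < d) dft v (eta ^+ k) *: powcol d (eta ^+ k)^-1.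
Proof.
apply/colP => m; rewrite !mxE summxE.
under eq_bigr do rewrite !mxE.
suff -> : \sum_(k < d) dft v (eta ^+ k) * (eta ^+ k)^-1 ^+ m = d%:R * v m 0.
  by rewrite mulKf.
have eta_m_neq0 : eta ^+ m != 0 by rewrite root_unity_neq0 ?root_unity_expr.
have ortho (h : 'I_d) :
    \sum_(k < d) (eta ^+ h / eta ^+ m) ^+ k = if h == m then d%:R else 0.
  rewrite geom_sum_root; last by rewrite exprMn exprVn !root_unity_expr invr1 mulr1.
  rewrite (can2_eq (divfK eta_m_neq0) (mulfK eta_m_neq0)) mul1r.
  by rewrite (eq_prim_root_expr eta_prim) !modn_small.
have term (h : 'I_d) : \sum_(k < d) (eta ^+ k) ^+ h * v h 0 * (eta ^+ k)^-1 ^+ m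
    = v h 0 * if h == m then d%:R else 0.
  rewrite -ortho mulr_sumr; apply: eq_bigr => k _.
  by rewrite mulrAC mulrC exprMn !exprVn -!exprM mulnC [(k * m)%N]mulnC.
rewrite /dft; under eq_bigr do rewrite mulr_suml; rewrite exchange_big /=.
under eq_bigr do rewrite term.
rewrite (bigD1 m) //= eqxx big1 ?addr0 1?mulrC // => h /negbTE ->.
exact: mulr0.
Qed.

Lemma size_prim_roots (zs : seq F) :
  uniq zs -> (forall x, x \in zs <-> d.-primitive_root x) -> size zs = totient d.
Proof.
move=> zs_uniq zsP.
have zs_perm : perm_eq zs [seq eta ^+ k | k <- iota 0 d & coprime k d].
  apply: uniq_perm => //.
    rewrite map_inj_in_uniq ?filter_uniq ?iota_uniq // => k k'.
    rewrite !mem_filter !mem_iota /= => /andP [_ kd] /andP [_ k'd] /eqP.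
    by rewrite (eq_prim_root_expr eta_prim) !modn_small // => /eqP.
  move=> x; apply/idP/idP => [/zsP x_prim | /mapP [k]].
    have [k xk] := prim_rootP eta_prim (prim_expr_order x_prim).
    rewrite xk map_f // mem_filter mem_iota leq0n add0n ltn_ord !andbT.
    by rewrite -(prim_root_exp_coprime _ eta_prim) -xk.
  rewrite mem_filter => /andP [k_coprime _] ->.
  by apply zsP; rewrite prim_root_exp_coprime.
rewrite (perm_size zs_perm) size_map size_filter totient_count_coprime.
rewrite -sum1_count big_mkcond /index_iota subn0; apply: eq_bigr => k _.
by rewrite coprime_sym; case: coprime.
Qed.

Lemma basis_mxker_Cmat (zs ws : seq F) :
    uniq zs -> (forall x, x \in zs <-> d.-primitive_root x) ->
    uniq ws -> (forall x, x \in ws <-> x ^+ d = 1 /\ ~~ d.-primitive_root x) ->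
  basis_of (mxker (Cmat d zs)) [seq powcol d w | w <- ws].
Proof.
move=> zs_uniq zsP ws_uniq wsP.
have ws_root : {in ws, forall w, w ^+ d = 1} by move=> w /wsP [].
rewrite /basis_of free_powcol // andbT eqEsubv; apply/andP; split.
  apply/span_subvP => _ /mapP [w /wsP [wd w_nprim] ->].
  rewrite memv_ker lfunE /= Cmat_mulmx_eq0; apply/allP => z /zsP z_prim.
  rewrite dft_powcol geom_sum_root; last first.
    by rewrite exprMn (prim_expr_order z_prim) wd mulr1.
  have [zw1|//] := eqVneq (z * w) 1.
  case/negP: w_nprim.
  have z_neq0 : z != 0 by rewrite (prim_root_eq0 z_prim) -lt0n.
  have -> : w = z^-1 by rewrite -(mulKf z_neq0 w) zw1 mulr1.
  exact: prim_rootV.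
apply/subvP => v; rewrite memv_ker lfunE /= Cmat_mulmx_eq0 => /allP v_zs.
have rs_uniq : uniq (zs ++ ws).
  rewrite cat_uniq zs_uniq ws_uniq andbT; apply/hasPn => w /wsP [_ w_nprim].
  by apply: contra w_nprim => /zsP.
have rsP x : x \in zs ++ ws <-> x ^+ d = 1.
  rewrite mem_cat; split => [/orP [/zsP /prim_expr_order | /wsP []] // | xd].
  have [x_prim|x_nprim] := boolP (d.-primitive_root x).
    by apply/orP; left; apply/zsP.
  by apply/orP; right; apply/wsP.
rewrite (dft_expansion v).
rewrite -(big_roots_unity (fun u => dft v u *: powcol d u^-1) rs_uniq rsP).
rewrite big_cat /= big1_seq ?add0r => [|z /andP [_ /v_zs /eqP ->]]; last first.
  by rewrite scale0r.
rewrite big_seq; apply/rpredZ/rpred_sum => w /wsP [wd w_nprim].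
apply/rpredZ/memv_span/map_f/wsP; split; first by rewrite exprVn wd invr1.
by apply: contra w_nprim => /prim_rootV; rewrite invrK.
Qed.

Lemma mxker_Cmat_mul n (zs : seq F) (A : 'M[F]_(d, n)) :
    (forall z, d.-primitive_root z -> z \in zs) ->
    (forall u, u ^+ d = 1 -> ~~ d.-primitive_root u -> (powcol d u)^T *m A = 0) ->
  mxker (Cmat d zs *m A) = mxker A.
Proof.
move=> zsP A_nprim; apply/vspaceP => x; rewrite !memv_ker !lfunE /= -mulmxA.
apply/idP/idP => [|/eqP ->]; last by rewrite mulmx0.
rewrite Cmat_mulmx_eq0 => /allP CAx.
rewrite (dft_expansion (A *m x)) big1 ?scaler0 // => k _.
suff -> : dft (A *m x) (eta ^+ k) = 0 by rewrite scale0r.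
have [k_prim|k_nprim] := boolP (d.-primitive_root (eta ^+ k)).
  exact/eqP/CAx/zsP.
by rewrite dftE mulmxA A_nprim ?root_unity_expr // mul0mx mxE.
Qed.

End PrimitiveRoot.
End RootsOfUnity.

Section Reduction.
Variables (F : fieldType) (red : algC -> F).
Hypothesis red_hom : reduction_map red.

Lemma red1 : red 1 = 1.
Proof. by case: red_hom. Qed.

Lemma red0 : red 0 = 0.
Proof.
case: red_hom => _ redD _; have := redD 0 0 (rpred0 _) (rpred0 _).
by rewrite addr0 => /esym/eqP; rewrite -subr_eq0 addrK => /eqP.
Qed.

Lemma red_mul x y : x \in Aint -> y \in Aint -> red (x * y) = red x * red y.
Proof. by case: red_hom => _ _; apply. Qed.

Lemma red_exp x k : x \in Aint -> red (x ^+ k) = red x ^+ k.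
Proof.
move=> x_int; elim: k => [|k IHk]; first by rewrite !expr0 red1.
by rewrite !exprS red_mul ?IHk // rpredX.
Qed.

Lemma red_sum (I : Type) (r : seq I) (P : pred I) (G : I -> algC) :
  (forall i, G i \in Aint) ->
  red (\sum_(i <- r | P i) G i) = \sum_(i <- r | P i) red (G i).
Proof.
move=> G_int; case: red_hom => _ redD _.
elim: r => [|x r IHr]; first by rewrite !big_nil red0.
by rewrite !big_cons; case: (P x); rewrite // redD ?IHr // rpred_sum.
Qed.

Lemma red_prim_root d (eps : algC) :
  d%:R != 0 :> F -> d.-primitive_root eps -> d.-primitive_root (red eps).
Proof.
move=> d_neq0 eps_prim; have d_gt0 := prim_order_gt0 eps_prim.
have eps_int : eps \in Aint := Aint_prim_root eps_prim.
have red_eps_d : red eps ^+ d = 1 by rewrite -red_exp // prim_expr_order // red1.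
have [m m_prim m_dvd] := prim_order_exists d_gt0 red_eps_d.
have [<- //|m_neq_d] := eqVneq m d.
have m_lt_d : (m < d)%N by rewrite ltn_neqAle m_neq_d dvdn_leq.
have eps_m : eps ^+ m != 1.
  by rewrite -(prim_order_dvd eps_prim) gtnNdvd // (prim_order_gt0 m_prim).
have eps_m_root : (eps ^+ m) ^+ d = 1 by rewrite exprAC (prim_expr_order eps_prim) expr1n.
(* Reducing the vanishing geometric sum of eps^m gives d = 0 in F. *)
have := geom_sum_root eps_m_root; rewrite (negbTE eps_m) => /(congr1 red).
rewrite red0 red_sum => [|h]; last by rewrite !rpredX.
under eq_bigr do rewrite !red_exp ?rpredX // (prim_expr_order m_prim) expr1n.
by rewrite sumr_const card_ord => /eqP; rewrite (negbTE d_neq0).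
Qed.

End Reduction.

Section DirichletCharacter.
Variables (d : nat) (chi : nat -> algC).
Hypothesis chi_char : dirichlet_char d chi.

Lemma chi_mod k : chi (k %% d) = chi k.
Proof.
case: chi_char => _ chi_periodic _; rewrite {2}(divn_eq k d).
elim: (k %/ d)%N => [|q IHq]; first by rewrite mul0n add0n.
by rewrite mulSn -addnA addnC chi_periodic.
Qed.

Lemma chi1 : chi 1 = 1.
Proof.
case: chi_char => chiM _ chi_neq0.
have chi1_neq0 : chi 1 != 0 by apply/chi_neq0; rewrite coprime1n.
by apply: (mulfI chi1_neq0); rewrite mulr1 -chiM.
Qed.

Lemma chiX a k : chi (a ^ k) = chi a ^+ k.
Proof.
case: chi_char => chiM _ _; elim: k => [|k IHk]; first by rewrite chi1.
by rewrite expnS chiM IHk exprS.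
Qed.

(* Nonzero values are roots of unity of order dividing phi(d), by Euler's theorem. *)
Lemma chi_Aint k : (0 < d)%N -> chi k \in Aint.
Proof.
move=> d_gt0; case: chi_char => _ _ chi_neq0.
have [k_coprime|k_ncoprime] := boolP (coprime k d); last first.
  suff -> : chi k = 0 by apply: rpred0.
  by apply/eqP; apply: contraNT k_ncoprime => /chi_neq0.
apply: (@Aint_unity_root (totient d)); first by rewrite totient_gt0.
apply/unity_rootP; rewrite -chiX -chi_mod cyclic.Euler_exp_totient //.
by rewrite chi_mod chi1.
Qed.

End DirichletCharacter.

Lemma coprime_mulmod_inj d b i j : (0 < d)%N -> coprime b d ->
  (b * i = b * j %[mod d])%N -> (i = j %[mod d])%N.
Proof.
move=> d_gt0 b_coprime bij.
have bt : (b ^ (totient d).-1 * b = 1 %[mod d])%N.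
  by rewrite -expnSr prednK ?totient_gt0 // cyclic.Euler_exp_totient.
have inv k : (k = b ^ (totient d).-1 * (b * k) %[mod d])%N.
  by rewrite mulnA -modnMml bt modnMml mul1n.
by rewrite (inv i) (inv j) -modnMmr bij modnMmr.
Qed.

(* If the Gauss-type sum were nonzero, every b = 1 mod d1 coprime to d would
   satisfy chi b = 1, making the proper divisor d1 an induced modulus. *)
Lemma gauss_sum_eq0 d d1 (chi : nat -> algC) (w : algC) :
    has_conductor d d chi -> (d1 %| d)%N -> (d1 < d)%N -> w ^+ d1 = 1 ->
  \sum_(h < d) chi h * w ^+ h = 0.
Proof.
move=> [chi_char [_ chi_min]] d1_dvd d1_lt_d wd1.
have d_gt0 : (0 < d)%N by apply: leq_ltn_trans d1_lt_d.
set S := \sum_(h < d) chi h * w ^+ h; apply/eqP; apply: contraT => S_neq0.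
suff /chi_min : induced_modulus d d1 chi by rewrite leqNgt d1_lt_d.
split=> // b b_coprime b1; case: (chi_char) => chiM _ _.
pose mulb (h : 'I_d) := Ordinal (ltn_pmod (b * h) d_gt0).
have mulb_inj : injective mulb.
  move=> h h' /(congr1 val) /(coprime_mulmod_inj d_gt0 b_coprime).
  by rewrite !modn_small // => /val_inj.
have S_chib : S = chi b * S.
  rewrite [LHS](reindex_inj mulb_inj) big_distrr; apply: eq_bigr => h _ /=.
  rewrite chi_mod // chiM -mulrA -(expr_mod _ wd1) modn_dvdm //.
  by rewrite -modnMml b1 modnMml mul1n expr_mod.
by apply: (mulIf S_neq0); rewrite mul1r -S_chib.
Qed.

Lemma mulchar_independent (F : fieldType) n (psi : 'I_n -> nat -> F) :
    (forall i, psi i 1%N = 1) ->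
    (forall i a h, psi i (a * h)%N = psi i a * psi i h) ->
    (forall i i', i != i' -> exists a, psi i a != psi i' a) ->
  forall y : 'I_n -> F, (forall h, \sum_i y i * psi i h = 0) -> forall i, y i = 0.
Proof.
move=> psi1 psiM psi_neq.
suff indep (m : nat) (y : 'I_n -> F) : (#|[set i | y i != 0%R]| <= m)%N ->
    (forall h, \sum_i y i * psi i h = 0) -> forall i, y i = 0.
  by move=> y; apply: indep.
elim: m y => [|m IHm] y y_supp y_rel i.
  apply/eqP; apply: contraTT y_supp => yi; rewrite -ltnNge card_gt0.
  by apply/set0Pn; exists i; rewrite inE.
have [j /= yj|y_eq0] := pickP [pred j | y j != 0]; last exact/eqP/negbFE/y_eq0.
have y_off_j k : k != j -> y k = 0.
  move=> kj; have [a psi_a] : exists a, psi j a != psi k a.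
    by apply: psi_neq; rewrite eq_sym.
  (* Subtracting psi_j a times the relation from its shift by a yields a
     relation with smaller support, which kills y k. *)
  pose z i := y i * (psi j a - psi i a).
  have z_rel h : \sum_i z i * psi i h = 0.
    transitivity (psi j a * \sum_i y i * psi i h - \sum_i y i * psi i (a * h)%N).
      rewrite mulr_sumr -sumrB; apply: eq_bigr => i' _.
      by rewrite psiM /z mulrBr mulrBl -!mulrA [psi j a * (y i' * _)]mulrCA.
    by rewrite !y_rel mulr0 subrr.
  have z_supp : (#|[set i | z i != 0%R]| <= m)%N.
    have z_sub : [set i | z i != 0] \subset [set i | y i != 0] :\ j.
      apply/subsetP => i'; rewrite !inE /z mulf_eq0 negb_or => /andP [-> psi_i'].
      by rewrite andbT; apply: contraNneq psi_i' => ->; rewrite subrr.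
    rewrite -ltnS (leq_trans _ y_supp) // (cardsD1 j [set i | y i != 0%R]).
    by rewrite inE yj add1n ltnS subset_leq_card.
  move/eqP: (IHm z z_supp z_rel k).
  by rewrite mulf_eq0 subr_eq0 (negbTE psi_a) orbF => /eqP.
have yj0 : y j = 0.
  have := y_rel 1%N; rewrite (bigD1 j) //= big1 => [|k /y_off_j ->]; last first.
    exact: mul0r.
  by rewrite addr0 psi1 mulr1.
by have [->|/y_off_j] := eqVneq i j.
Qed.

Section ReducedCharacters.
Variables (F : fieldType) (red : algC -> F) (d n : nat) (chi : 'I_n -> nat -> algC).
Hypotheses (red_hom : reduction_map red) (chi_cond : forall i, has_conductor d d (chi i)).

Lemma mulmx_powcol_Emat_nonprim (eps : algC) k :
    d.-primitive_root eps -> ~~ coprime k d ->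
  (powcol d (red eps ^+ k))^T *m Emat d red chi = 0.
Proof.
move=> eps_prim k_ncoprime; have d_gt0 := prim_order_gt0 eps_prim.
have eps_int : eps \in Aint := Aint_prim_root eps_prim.
have chi_int i h : chi i h \in Aint by apply: chi_Aint (chi_cond i).1 _ d_gt0.
set d1 := (d %/ gcdn k d)%N.
have d1_dvd : (d1 %| d)%N.
  by rewrite -[X in (_ %| X)%N](divnK (dvdn_gcdr k d)) dvdn_mulr.
have d1_lt_d : (d1 < d)%N.
  by rewrite ltn_Pdiv // ltn_neqAle eq_sym k_ncoprime gcdn_gt0 d_gt0 orbT.
have w_d1 : (eps ^+ k) ^+ d1 = 1 := prim_expr_order (exp_prim_root eps_prim k).
apply/matrixP => i0 i; rewrite ord1 !mxE.
have := gauss_sum_eq0 (chi_cond i) d1_dvd d1_lt_d w_d1 => /(congr1 red).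
rewrite (red0 red_hom) (red_sum red_hom) => [S0|h]; last by rewrite rpredM ?rpredX.
rewrite -[RHS]S0; apply: eq_bigr => h _; rewrite !mxE (red_mul red_hom) ?rpredX //.
by rewrite !(red_exp red_hom) ?rpredX // mulrC exprAC.
Qed.

Lemma mxker_Emat_eq0 : (0 < d)%N ->
    (forall i i', i != i' -> exists a, red (chi i a) != red (chi i' a)) ->
  mxker (Emat d red chi) = 0%VS.
Proof.
move=> d_gt0 chi_neq.
have chi_int i h : chi i h \in Aint by apply: chi_Aint (chi_cond i).1 _ d_gt0.
apply/eqP; rewrite -subv0; apply/subvP => x; rewrite memv_ker lfunE memv0 /= => /eqP Ex.
apply/eqP/colP => i; rewrite mxE.
apply: (@mulchar_independent F n (fun i h => red (chi i h)) _ _ chi_neq (fun i => x i 0))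
  => [j|j a h|h].
- by rewrite (chi1 (chi_cond j).1) (red1 red_hom).
- by case: (chi_cond j).1 => chiM _ _; rewrite chiM (red_mul red_hom).
have := congr1 (fun v : 'cV_d => v (Ordinal (ltn_pmod h d_gt0)) 0) Ex.
rewrite !mxE => Exh; rewrite -[RHS]Exh; apply: eq_bigr => j _.
by rewrite mxE /= (chi_mod (chi_cond j).1) mulrC.
Qed.

End ReducedCharacters.

Unset Implicit Arguments.

Theorem lemma4 (p : nat) (d : nat) (F : closedFieldType)
  (Hp : prime p) (Hodd : odd p) (Hd : (2 <= d)%N) (Hpd : ~~ (p %| d)%N)
  (HcharF : p \in [pchar F])
  (Halg : forall x : F, exists k : nat, (0 < k)%N /\ x ^+ (p ^ k) = x)
  (zs : seq F) (Hzs_uniq : uniq zs)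
  (Hzs : forall x : F, x \in zs <-> d.-primitive_root x)
  (ws : seq F) (Hws_uniq : uniq ws)
  (Hws : forall x : F, x \in ws <-> (x ^+ d = 1 /\ ~~ d.-primitive_root x))
  (n : nat) (chi : 'I_n -> nat -> algC)
  (Hchi : forall i, has_conductor d d (chi i))
  (red : algC -> F) (Hred : reduction_map red)
  (Hdist : forall i i' : 'I_n, i != i' ->
     exists a : nat, coprime a d /\ red (chi i a) != red (chi i' a)) :
  [/\ \rank (Cmat d zs) = totient d,
      basis_of (mxker (Cmat d zs)) [seq powcol d w | w <- ws] &
      mxker (Cmat d zs *m Emat d red chi) = 0%VS].
Proof.
have d_gt0 : (0 < d)%N by apply: leq_trans Hd.
have d_neq0 : d%:R != 0 :> F by rewrite -(dvdn_pcharf HcharF).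
have [eps eps_prim] := C_prim_root_exists d_gt0.
have eta_prim := red_prim_root Hred d_neq0 eps_prim.
split.
- by rewrite rank_Cmat ?(size_prim_roots eta_prim) // => z /Hzs /prim_expr_order.
- exact: (basis_mxker_Cmat eta_prim Hzs_uniq Hzs Hws_uniq Hws).
rewrite (mxker_Cmat_mul eta_prim) => [|z /Hzs //|u /(prim_rootP eta_prim) [k ->]].
  by apply: mxker_Emat_eq0 => // i i' /Hdist [a [_ chi_neq]]; exists a.
by rewrite prim_root_exp_coprime //; apply: mulmx_powcol_Emat_nonprim.
Qed.
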